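(* Let $w=(w_0,\dots,w_l)$ with $w_0$ a positive integer, $w_1,\dots,w_l$ nonnegative integers and $w_0\ge\cdots\ge w_l$. For a graph $G$ of order at least three, $\gamma_{(w_0,\dots,w_l)}(G)=2$ if and only if one of the following holds: (i) $w_2=0$, $\gamma(G)=1$, and either $w_0=2$ or $w_0=w_1=1$; (ii) $w_0=1$, $w_1=0$ and $\gamma(G)=2$; (iii) $w_0=1$, $w_1=1$ and $\gamma_t(G)=2$; (iv) $w_0=2$, $w_1=0$ and $\gamma_2(G)=2$; (v) $w_0=2$, $w_1=1$ and $\gamma_{\times 2}(G)=2$.
   Context: All graphs are finite and simple; $N(v)$ denotes the open neighbourhood and $N[v]=N(v)\cup\{v\}$. For a vector $w=(w_0,\dots,w_l)$ of nonnegative integers with $w_0\ge1$, a function $f:V(G)\to\{0,\dots,l\}$ is a $w$-dominating function if $\sum_{u\in N(v)}f(u)\ge w_i$ for every vertex $v$ with $f(v)=i$. The weight is $\omega(f)=\sum_v f(v)$, and $\gamma_w(G)$ is the minimum weight of a $w$-dominating function on $G$. $\gamma(G)$ is the domination number and $\gamma_t(G)$ the total domination number (minimum size of $S$ with every vertex having a neighbour in $S$). $\gamma_2(G)$ is the minimum size of $S\subseteq V(G)$ such that every vertex not in $S$ has at least two neighbours in $S$. $\gamma_{\times2}(G)$ (double domination number) is the minimum size of $S\subseteq V(G)$ such that $|N[v]\cap S|\ge 2$ for every $v\in V(G)$. *)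

From mathcomp Require Import all_boot.
Set Implicit Arguments. Unset Strict Implicit. Unset Printing Implicit Defensive.

Definition simple_graph (T : finType) (e : rel T) : Prop :=
  symmetric e /\ irreflexive e.

Definition is_min_value (X : Type) (P : X -> Prop) (weight : X -> nat) (k : nat) : Prop :=
  (exists x, P x /\ weight x = k) /\ (forall x, P x -> k <= weight x).

Definition nbsum (T : finType) (e : rel T) (f : T -> nat) (v : T) : nat :=
  \sum_(u | e v u) f u.

(* w is given as the sequence [w_0; ...; w_l] (so l = size w - 1).
   A w-dominating function f : V -> {0,...,l} with sum_{u in N(v)} f u >= w_{f v}. *)
Definition w_dominating (T : finType) (e : rel T) (w : seq nat)
  (f : {ffun T -> 'I_(size w)}) : Prop :=
  forall v : T, nth 0 w (f v) <= nbsum e (fun u => nat_of_ord (f u)) v.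

Definition fweight (T : finType) (n : nat) (f : {ffun T -> 'I_n}) : nat :=
  \sum_v nat_of_ord (f v).

Definition gamma_w_eq (T : finType) (e : rel T) (w : seq nat) (k : nat) : Prop :=
  is_min_value (w_dominating e (w := w)) (@fweight T (size w)) k.

Definition dominating (T : finType) (e : rel T) (S : {set T}) : Prop :=
  forall v, v \in S \/ exists2 u, u \in S & e v u.

Definition total_dominating (T : finType) (e : rel T) (S : {set T}) : Prop :=
  forall v, exists2 u, u \in S & e v u.

Definition two_dominating (T : finType) (e : rel T) (S : {set T}) : Prop :=
  forall v, v \notin S -> 2 <= #|[set u in S | e v u]|.

Definition double_dominating (T : finType) (e : rel T) (S : {set T}) : Prop :=
  forall v, 2 <= #|[set u in S | (u == v) || e v u]|.

Definition card_set (T : finType) (S : {set T}) : nat := #|S|.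

Definition gamma_eq (T : finType) (e : rel T) (k : nat) : Prop :=
  is_min_value (dominating e) (@card_set T) k.
Definition gamma_t_eq (T : finType) (e : rel T) (k : nat) : Prop :=
  is_min_value (total_dominating e) (@card_set T) k.
Definition gamma_2_eq (T : finType) (e : rel T) (k : nat) : Prop :=
  is_min_value (two_dominating e) (@card_set T) k.
Definition gamma_x2_eq (T : finType) (e : rel T) (k : nat) : Prop :=
  is_min_value (double_dominating e) (@card_set T) k.

(* "w_i = c", meaning the entry w_i exists (i <= l) and equals c. *)
Definition w_is (w : seq nat) (i c : nat) : Prop := i < size w /\ nth 0 w i = c.

From mathcomp Require Import all_boot zify.
Set Implicit Arguments. Unset Strict Implicit. Unset Printing Implicit Defensive.

(* A function of weight at most two is 0, k 1_x with k <= 2, or 1_x + 1_y.  Since w_0 > 0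
   the zero function is never w-dominating; 1_x is w-dominating iff w_1 = 0, w_0 = 1 and x is
   adjacent to all other vertices; 2 1_x is iff w_2 = 0, w_0 <= 2 and x is again universal;
   1_x + 1_y is iff every vertex outside {x, y} has at least w_0 neighbours in {x, y} and x, y
   have at least w_1 neighbours there.  A third vertex forces w_0 <= 2 and w_1 <= 1 in the last
   case, and the four possible values of (w_0, w_1) describe exactly the two-element
   dominating, total dominating, 2-dominating and double dominating sets. *)

Lemma is_min_valueE (X : Type) (P : X -> Prop) (weight : X -> nat) k :
  is_min_value P weight k <->
  (exists x, P x /\ weight x = k) /\ ~ exists x, P x /\ weight x < k.
Proof.
split=> [[ex lb] | [ex nlt]]; split=> //.
  by case=> x [/lb]; rewrite leqNgt => /negP.
by move=> x Px; rewrite leqNgt; apply/negP => lt_k; apply: nlt; exists x.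
Qed.

Lemma sorted_geq_nth (s : seq nat) i j :
  sorted geq s -> i <= j -> nth 0 s j <= nth 0 s i.
Proof.
move=> s_sorted le_ij; have [lt_js | le_sj] := ltnP j (size s); last first.
  by rewrite nth_default.
have geq_trans : transitive geq by move=> y x z xy yz; apply: leq_trans yz xy.
by apply: (sorted_leq_nth geq_trans leqnn) => //; rewrite inE (leq_ltn_trans le_ij).
Qed.

Lemma sum_indicator (T : finType) (P : pred T) x :
  \sum_(u | P u) (u == x) = P x.
Proof.
rewrite big_mkcond (bigD1 x) //= eqxx big1 ?addn0 => [|u /negbTE ->]; by case: (P _).
Qed.

Lemma sum_nat_le1 (T : finType) (x0 : T) (g : T -> nat) :
  \sum_u g u <= 1 -> exists x, g =1 (fun u => (u == x) * \sum_u g u).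
Proof.
move=> le1; have [sum0 | sum1] : \sum_u g u = 0 \/ \sum_u g u = 1 by lia.
  exists x0 => u; rewrite sum0 muln0.
  by move/eqP: sum0; rewrite sum_nat_eq0 => /forall_inP/(_ u isT)/eqP.
have /eqP/sum_nat_eq1 [x [_ gx g0]] := sum1.
by exists x => u; rewrite sum1; case: (eqVneq u x) => [-> | ux]; rewrite ?gx ?g0.
Qed.

Lemma sum_nat_eq2 (T : finType) (g : T -> nat) :
  \sum_u g u = 2 ->
  (exists x, g =1 (fun u => (u == x) * 2)) \/
  exists x y, x != y /\ g =1 (fun u => (u == x) + (u == y)).
Proof.
move=> sum2; have /forall_inPn [x _ gx_neq0] : ~~ [forall (u | true), g u == 0].
  by rewrite -sum_nat_eq0 sum2.
rewrite (bigD1 x) //= in sum2.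
have [gx1 | gx2] : g x = 1 \/ g x = 2 by lia.
- right; have /eqP/sum_nat_eq1 [y [yx gy g0]] : \sum_(u | u != x) g u = 1 by lia.
  exists x, y; split; first by rewrite eq_sym.
  move=> u; case: (eqVneq u x) => [-> | ux]; first by rewrite gx1 eq_sym (negbTE yx).
  by case: (eqVneq u y) => [-> | uy]; rewrite ?gy ?g0.
- left; exists x => u; case: (eqVneq u x) => [-> | ux]; first by rewrite gx2.
  have /eqP := sum2; rewrite gx2 -[2]addn0 eqn_add2l sum_nat_eq0 => /forall_inP g0.
  by apply/eqP/g0.
Qed.

Lemma exists_notin (T : finType) (A : {set T}) : #|A| < #|T| -> exists v, v \notin A.
Proof.
move=> A_lt; have /card_gt0P [v] : 0 < #|~: A| by have := cardsC A; lia.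
by rewrite inE; exists v.
Qed.

Lemma card_setId_le (T : finType) (S : {set T}) (P : pred T) :
  #|[set u in S | P u]| <= #|S|.
Proof. by rewrite setIdE; apply/subset_leq_card/subsetIl. Qed.

Lemma card_set2_filter (T : finType) (P : pred T) x y :
  x != y -> #|[set u in [set x; y] | P u]| = P x + P y.
Proof.
move=> xy; rewrite -sum1dep_card big_mkcondr big_setU1 ?inE // big_set1.
by case: (P x); case: (P y).
Qed.

Lemma ex_in_set2 (T : finType) (P : pred T) x y :
  (exists2 u, u \in [set x; y] & P u) <-> P x || P y.
Proof.
split=> [[u] | /orP[Px | Py]]; [ | by exists x; rewrite ?set21 | by exists y; rewrite ?set22].
by rewrite !inE => /orP[] /eqP-> ->; rewrite ?orbT.
Qed.

Section WeightedDomination.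
Variables (T : finType) (e : rel T).
Hypotheses (e_sym : symmetric e) (e_irr : irreflexive e).

Definition universal (x : T) : Prop := forall v, v != x -> e v x.

Definition dominating_pair (a b : nat) (x y : T) : Prop :=
  b <= e x y /\ forall v, v != x -> v != y -> a <= e v x + e v y.

Lemma dominating_pair_bounds a b x y :
  2 < #|T| -> dominating_pair a b x y -> a <= 2 /\ b <= 1.
Proof.
move=> T_gt2 [b_le dom]; have [v] : exists v, v \notin [set x; y].
  by apply: exists_notin; apply: leq_ltn_trans T_gt2; rewrite cards2; case: (x != y).
rewrite !inE negb_or => /andP[vx vy]; have := dom v vx vy; move: b_le.
by case: (e x y); case: (e v x); case: (e v y); lia.
Qed.

Lemma exists_universal_threshold a k :
  0 < a -> 1 < #|T| ->
  (exists x, forall v, v != x -> a <= e v x * k) <-> a <= k /\ exists x, universal x.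
Proof.
move=> a_gt0 T_gt1; split=> [[x dom] | [a_le [x ux]]].
- have [v] : exists v, v \notin [set x] by apply: exists_notin; rewrite cards1.
  rewrite inE => vx; split; first by have := dom v vx; case: (e v x); lia.
  by exists x => u ux; have := dom u ux; case: (e u x); lia.
- by exists x => v /ux ->; rewrite mul1n.
Qed.

Definition nat_w_dominating (w : seq nat) (g : T -> nat) : Prop :=
  forall v, nth 0 w (g v) <= nbsum e g v.

Lemma eq_nat_w_dominating w g1 g2 :
  g1 =1 g2 -> nat_w_dominating w g1 <-> nat_w_dominating w g2.
Proof.
move=> eq_g; have eq_nb v : nbsum e g1 v = nbsum e g2 v by apply: eq_bigr.
by split=> dom v; move: (dom v); rewrite eq_nb eq_g.
Qed.

Lemma nbsum_point x k v : nbsum e (fun u => (u == x) * k) v = e v x * k.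
Proof. by rewrite /nbsum -big_distrl sum_indicator. Qed.

Lemma nbsum_pair x y v : nbsum e (fun u => (u == x) + (u == y)) v = e v x + e v y.
Proof. by rewrite /nbsum big_split !sum_indicator. Qed.

Lemma nat_w_dominating_point w x k :
  nat_w_dominating w (fun u => (u == x) * k) <->
  nth 0 w k = 0 /\ forall v, v != x -> nth 0 w 0 <= e v x * k.
Proof.
split=> [dom | [wk0 dom] v].
- split; first by have := dom x; rewrite nbsum_point eqxx e_irr mul1n leqn0 => /eqP.
  by move=> v vx; have := dom v; rewrite nbsum_point (negbTE vx).
- rewrite nbsum_point; case: (eqVneq v x) => [-> | vx]; last exact: dom.
  by rewrite e_irr mul1n wk0.
Qed.

Lemma nat_w_dominating_pair w x y : x != y ->
  nat_w_dominating w (fun u => (u == x) + (u == y)) <->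
  dominating_pair (nth 0 w 0) (nth 0 w 1) x y.
Proof.
move=> xy; split=> [dom | [exy dom] v].
- split; first by have := dom x; rewrite nbsum_pair eqxx (negbTE xy) e_irr.
  by move=> v vx vy; have := dom v; rewrite nbsum_pair (negbTE vx) (negbTE vy).
- rewrite nbsum_pair; case: (eqVneq v x) => [-> | vx]; first by rewrite (negbTE xy) e_irr.
  case: (eqVneq v y) => [-> | vy]; last exact: dom.
  by rewrite e_irr e_sym addn0.
Qed.

Lemma exists_w_dominating_ffun w (P : nat -> Prop) :
  (exists f : {ffun T -> 'I_(size w)}, w_dominating e f /\ P (fweight f)) <->
  exists g, (forall u, g u < size w) /\ nat_w_dominating w g /\ P (\sum_u g u).
Proof.
split=> [[f [dom Pf]] | [g [g_lt [dom Pg]]]]; first by exists (fun u => f u).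
pose f : {ffun T -> 'I_(size w)} := [ffun u => Ordinal (g_lt u)].
have fE : (fun u => nat_of_ord (f u)) =1 g by move=> u; rewrite ffunE.
exists f; split; first exact/(eq_nat_w_dominating _ fE).
by rewrite /fweight (eq_bigr _ (fun u _ => fE u)).
Qed.

Lemma exists_w_dominating_weight_lt2 w : 0 < nth 0 w 0 -> 1 < #|T| ->
  (exists g, (forall u, g u < size w) /\ nat_w_dominating w g /\ \sum_u g u < 2) <->
  1 < size w /\ nth 0 w 1 = 0 /\ nth 0 w 0 <= 1 /\ exists x, universal x.
Proof.
move=> a_gt0 T_gt1; split=> [[g [g_lt [dom g_le1]]] | [w_gt1 [w10 univ]]].
- have /card_gt0P [x0 _] : 0 < #|T| by apply: ltnW.
  have [x gE] := sum_nat_le1 x0 g_le1.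
  move/(eq_nat_w_dominating _ gE)/nat_w_dominating_point: dom => [wk0 dom].
  have sum1 : \sum_u g u = 1 by move: wk0 g_le1; case: (\sum_u g u) => [|[|]] //; lia.
  rewrite sum1 in wk0 dom; split; first by have := g_lt x; rewrite gE eqxx sum1.
  by split=> //; apply/exists_universal_threshold => //; exists x.
- have [x dom] := (exists_universal_threshold 1 a_gt0 T_gt1).2 univ.
  exists (fun u => (u == x) * 1); split; first by move=> u; case: (u == x); lia.
  split; first exact/nat_w_dominating_point.
  by rewrite -big_distrl sum_indicator.
Qed.

Lemma exists_w_dominating_weight2 w : 0 < nth 0 w 0 -> 1 < #|T| ->
  (exists g, (forall u, g u < size w) /\ nat_w_dominating w g /\ \sum_u g u = 2) <->
  (2 < size w /\ nth 0 w 2 = 0 /\ nth 0 w 0 <= 2 /\ exists x, universal x) \/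
  (1 < size w /\ exists x y, x != y /\ dominating_pair (nth 0 w 0) (nth 0 w 1) x y).
Proof.
move=> a_gt0 T_gt1.
split=> [[g [g_lt [dom /sum_nat_eq2 [[x gE] | [x [y [xy gE]]]]]]] | ].
- left; move/(eq_nat_w_dominating _ gE)/nat_w_dominating_point: dom => [w20 dom].
  split; first by have := g_lt x; rewrite gE eqxx.
  by split=> //; apply/exists_universal_threshold => //; exists x.
- right; move/(eq_nat_w_dominating _ gE)/(nat_w_dominating_pair _ xy): dom.
  move=> pair; split; last by exists x, y.
  by have := g_lt x; rewrite gE eqxx (negbTE xy).
case=> [[w_gt2 [w20 univ]] | [w_gt1 [x [y [xy pair]]]]].
- have [x dom] := (exists_universal_threshold 2 a_gt0 T_gt1).2 univ.
  exists (fun u => (u == x) * 2); split; first by move=> u; case: (u == x); lia.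
  split; first exact/nat_w_dominating_point.
  by rewrite -big_distrl sum_indicator.
- exists (fun u => (u == x) + (u == y)); split.
    move=> u; apply: leq_ltn_trans w_gt1.
    by case: (eqVneq u x) => [-> | _]; rewrite ?(negbTE xy) //; case: (u == y).
  split; first exact/nat_w_dominating_pair.
  by rewrite big_split !sum_indicator.
Qed.

Lemma gamma_w_eq2 w : 0 < nth 0 w 0 -> 1 < #|T| ->
  gamma_w_eq e w 2 <->
  ((2 < size w /\ nth 0 w 2 = 0 /\ nth 0 w 0 <= 2 /\ exists x, universal x) \/
   (1 < size w /\ exists x y, x != y /\ dominating_pair (nth 0 w 0) (nth 0 w 1) x y)) /\
  ~ (1 < size w /\ nth 0 w 1 = 0 /\ nth 0 w 0 <= 1 /\ exists x, universal x).
Proof.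
move=> a_gt0 T_gt1; rewrite /gamma_w_eq is_min_valueE.
rewrite (exists_w_dominating_ffun w (fun k => k = 2)).
rewrite (exists_w_dominating_ffun w (fun k => k < 2)).
by rewrite exists_w_dominating_weight2 // exists_w_dominating_weight_lt2.
Qed.

End WeightedDomination.

Section DominatingSets.
Variables (T : finType) (e : rel T).
Hypotheses (e_sym : symmetric e) (e_irr : irreflexive e).

Lemma exists_card_eq2 (P : {set T} -> Prop) (Q : T -> T -> Prop) :
  (forall x y, x != y -> P [set x; y] <-> Q x y) ->
  (exists S, P S /\ card_set S = 2) <-> exists x y, x != y /\ Q x y.
Proof.
move=> PQ; split=> [[S [PS /eqP/cards2P [x [y [xy SE]]]]] | [x [y [xy Qxy]]]].
  by exists x, y; split=> //; apply/(PQ _ _ xy); rewrite -SE.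
by exists [set x; y]; split; [exact/(PQ _ _ xy) | rewrite /card_set cards2 xy].
Qed.

Lemma min_card_eq2 (P : {set T} -> Prop) (Q : T -> T -> Prop) :
  (forall S, P S -> 2 <= #|S|) -> (forall x y, x != y -> P [set x; y] <-> Q x y) ->
  is_min_value P (@card_set T) 2 <-> exists x y, x != y /\ Q x y.
Proof. by move=> lb /exists_card_eq2 <-; split=> [[] | ]. Qed.

Lemma dominating_set0 (v : T) : ~ dominating e set0.
Proof. by case/(_ v) => [|[u]]; rewrite inE. Qed.

Lemma dominating_set1 z : dominating e [set z] <-> universal e z.
Proof.
split=> [dom v vz | univ v].
  by case: (dom v) => [|[u]]; rewrite !inE ?(negbTE vz) // => /eqP->.
case: (eqVneq v z) => [-> | /univ evz]; first by left; rewrite set11.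
by right; exists z; rewrite ?set11.
Qed.

Lemma dominating_set2 x y : dominating e [set x; y] <-> dominating_pair e 1 0 x y.
Proof.
split=> [dom | [_ dom] v].
  split=> // v vx vy; rewrite addn_gt0 !lt0b.
  by case: (dom v) => [|/ex_in_set2 //]; rewrite !inE (negbTE vx) (negbTE vy).
have [|] := boolP (v \in [set x; y]); [by left | rewrite !inE negb_or => /andP[vx vy]].
by right; apply/ex_in_set2; have := dom v vx vy; rewrite addn_gt0 !lt0b.
Qed.

Lemma dominating_card_lt2 : 0 < #|T| ->
  (exists S, dominating e S /\ card_set S < 2) <-> exists x, universal e x.
Proof.
move=> /card_gt0P [v _]; split=> [[S [dom]] | [x /dominating_set1 dom]]; last first.
  by exists [set x]; rewrite /card_set cards1.
rewrite /card_set ltnS leq_eqVlt ltnS leqn0 cards_eq0 => /orP[/cards1P [x SE] | /eqP S0].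
  by exists x; apply/dominating_set1; rewrite -SE.
by case: (dominating_set0 v); rewrite -S0.
Qed.

Lemma gamma_eq1 : 0 < #|T| -> gamma_eq e 1 <-> exists x, universal e x.
Proof.
move=> /card_gt0P [v _]; rewrite /gamma_eq is_min_valueE.
split=> [[[S [dom /eqP/cards1P [x SE]]] _] | [x /dominating_set1 dom]].
  by exists x; apply/dominating_set1; rewrite -SE.
split; first by exists [set x]; rewrite /card_set cards1.
case=> S [domS]; rewrite /card_set ltnS leqn0 cards_eq0 => /eqP S0.
by apply: (dominating_set0 v); rewrite -S0.
Qed.

Lemma gamma_eq2 : 0 < #|T| ->
  gamma_eq e 2 <->
  ~ (exists x, universal e x) /\ exists x y, x != y /\ dominating_pair e 1 0 x y.
Proof.
move=> T_gt0; rewrite /gamma_eq is_min_valueE (dominating_card_lt2 T_gt0).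
by rewrite (exists_card_eq2 (fun x y _ => dominating_set2 x y)); split=> [[] | []].
Qed.

Lemma total_dominating_set2 x y :
  total_dominating e [set x; y] <-> dominating_pair e 1 1 x y.
Proof.
split=> [dom | [exy dom] v].
  have {}dom v : e v x || e v y by apply/ex_in_set2.
  split; first by have := dom x; rewrite e_irr lt0b.
  by move=> v _ _; rewrite addn_gt0 !lt0b.
apply/ex_in_set2; case: (eqVneq v x) => [-> | vx]; first by move: exy; rewrite lt0b e_irr.
case: (eqVneq v y) => [-> | vy]; first by move: exy; rewrite lt0b e_irr e_sym orbF.
by have := dom v vx vy; rewrite addn_gt0 !lt0b.
Qed.

Lemma total_dominating_card_ge2 S : 0 < #|T| -> total_dominating e S -> 2 <= #|S|.
Proof.
move=> /card_gt0P [v _] dom; have [u uS _] := dom v; have [u' u'S euu'] := dom u.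
apply/card_gt1P; exists u, u'; split=> //.
by apply: contraTneq euu' => ->; rewrite e_irr.
Qed.

Lemma gamma_t_eq2 : 0 < #|T| ->
  gamma_t_eq e 2 <-> exists x y, x != y /\ dominating_pair e 1 1 x y.
Proof.
move=> T_gt0; apply: min_card_eq2 => [S | x y _]; first exact: total_dominating_card_ge2.
exact: total_dominating_set2.
Qed.

Lemma two_dominating_set2 x y :
  x != y -> two_dominating e [set x; y] <-> dominating_pair e 2 0 x y.
Proof.
move=> xy; split=> [dom | [_ dom] v].
  split=> // v vx vy; rewrite -card_set2_filter //.
  by apply: dom; rewrite !inE negb_or vx vy.
by rewrite !inE negb_or card_set2_filter // => /andP[]; apply: dom.
Qed.

Lemma two_dominating_card_ge2 S : 1 < #|T| -> two_dominating e S -> 2 <= #|S|.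
Proof.
move=> T_gt1 dom; rewrite leqNgt; apply/negP => S_lt2.
have [v /dom] : exists v, v \notin S by apply: exists_notin; lia.
by move/leq_trans/(_ (card_setId_le _ _)); lia.
Qed.

Lemma gamma_2_eq2 : 1 < #|T| ->
  gamma_2_eq e 2 <-> exists x y, x != y /\ dominating_pair e 2 0 x y.
Proof.
move=> T_gt1; apply: min_card_eq2 => [S | x y]; first exact: two_dominating_card_ge2.
exact: two_dominating_set2.
Qed.

Lemma double_dominating_set2 x y :
  x != y -> double_dominating e [set x; y] <-> dominating_pair e 2 1 x y.
Proof.
move=> xy; have cardE v : #|[set u in [set x; y] | (u == v) || e v u]| =
    ((x == v) || e v x) + ((y == v) || e v y) by apply: card_set2_filter.
split=> [dom | [exy dom] v]; rewrite ?cardE.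
  split; first by have := dom x; rewrite cardE eqxx eq_sym (negbTE xy) /=; lia.
  by move=> v vx vy; have := dom v; rewrite cardE !(eq_sym _ v) (negbTE vx) (negbTE vy).
case: (eqVneq v x) => [-> | vx]; first by rewrite eq_sym (negbTE xy) /=; lia.
case: (eqVneq v y) => [-> | vy]; first by rewrite e_sym /=; lia.
exact: dom.
Qed.

Lemma double_dominating_card_ge2 S : 0 < #|T| -> double_dominating e S -> 2 <= #|S|.
Proof. by move=> /card_gt0P [v _] /(_ v) /leq_trans; apply; apply: card_setId_le. Qed.

Lemma gamma_x2_eq2 : 0 < #|T| ->
  gamma_x2_eq e 2 <-> exists x y, x != y /\ dominating_pair e 2 1 x y.
Proof.
move=> T_gt0; apply: min_card_eq2 => [S | x y]; first exact: double_dominating_card_ge2.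
exact: double_dominating_set2.
Qed.

End DominatingSets.

Theorem theorem12 (w : seq nat) (T : finType) (e : rel T) :
  0 < size w ->
  0 < nth 0 w 0 ->
  sorted geq w ->
  simple_graph e ->
  3 <= #|T| ->
  (gamma_w_eq e w 2 <->
     (w_is w 2 0 /\ gamma_eq e 1 /\ (w_is w 0 2 \/ (w_is w 0 1 /\ w_is w 1 1))) \/
         (w_is w 0 1 /\ w_is w 1 0 /\ gamma_eq e 2) \/
         (w_is w 0 1 /\ w_is w 1 1 /\ gamma_t_eq e 2) \/
         (w_is w 0 2 /\ w_is w 1 0 /\ gamma_2_eq e 2) \/
         (w_is w 0 2 /\ w_is w 1 1 /\ gamma_x2_eq e 2)).
Proof.
move=> w_gt0 a_gt0 w_sorted [e_sym e_irr] T_ge3.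
have T_gt1 : 1 < #|T| by apply: ltnW.
have T_gt0 : 0 < #|T| by apply: ltnW.
have b_le_a : nth 0 w 1 <= nth 0 w 0 by apply: sorted_geq_nth.
rewrite gamma_w_eq2 // gamma_eq1 // gamma_eq2 // gamma_t_eq2 // gamma_2_eq2 //.
rewrite gamma_x2_eq2 // /w_is.
move: (nth 0 w 0) (nth 0 w 1) a_gt0 b_le_a => a b a_gt0 b_le_a.
split=> [[[[w_gt2 [c0 [a_le2 univ]]] | [w_gt1 pair]] not_lt2] | ].
- have b_gt0 : a <= 1 -> 0 < b.
    by rewrite lt0n => a_le1; apply/eqP => b0; apply: not_lt2; do !split=> //; lia.
  by left; do 2!split=> //; lia.
- have [a_le2 b_le1] : a <= 2 /\ b <= 1.
    by case: pair => x [y [_ /(dominating_pair_bounds T_ge3)]].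
  have [a1 | a2] : a = 1 \/ a = 2 by [lia];
    have [b0 | b1] : b = 0 \/ b = 1 by [lia]; subst a b.
  + by right; left; do !split=> //; move=> univ; apply: not_lt2.
  + by do 2!right; left.
  + by do 3!right; left.
  + by do 4!right.
- case=> [[[w_gt2 c0] [univ a_cases]] | pairs].
    by split; [left; do !split=> //; lia | case=> _ [b0 [a_le1 _]]; lia].
  case: pairs => [[[_ ->] [[w_gt1 ->] [not_univ pair]]] |
    [[[_ ->] [[w_gt1 ->] pair]] | [[[_ ->] [[w_gt1 ->] pair]] | [[_ ->] [[w_gt1 ->] pair]]]]].
  + by split; [right | case=> _ [_ [_ univ]]].
  + by split; [right | case=> _ [b0 _]].
  + by split; [right | case=> _ [_ [a_le1 _]]].
  + by split; [right | case=> _ [b0 _]].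
Qed.
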